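(* As formal power series in $q$ (or for $|q|<1$), \[\sum_{\pi\in\overline{\mathcal{P}}}a^{\ell_o(\pi)}q^{|\pi|}=\sum_{m\ge0}\frac{q^m}{(q;q)_m}\sum_{j\ge0}a^jq^{\binom j2}{m\brack j}.\]
   Context: $\overline{\mathcal{P}}$ is the set of all overpartitions, including the empty one. An overpartition is a partition in which the first occurrence of each part size may be overlined. For an overpartition $\pi$: - $|\pi|$ is the sum of the sizes of its parts; - $\ell_o(\pi)$ is the number of overlined parts of $\pi$. $(a;q)_n=\prod_{i=0}^{n-1}(1-aq^i)$. The Gaussian binomial is ${M\brack N}=\frac{(q;q)_M}{(q;q)_N(q;q)_{M-N}}$ for $0\le N\le M$ and $0$ otherwise. *)

From mathcomp Require Import all_boot all_order all_algebra.
Set Implicit Arguments. Unset Strict Implicit. Unset Printing Implicit Defensive.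
Import GRing.Theory.
Local Open Scope ring_scope.

(* An overpartition is represented as the sequence of its parts in
   nonincreasing order, each part being a pair (size, overlined?).
   Parts are positive; consecutive parts are either strictly decreasing in
   size, or of equal size with the later one NOT overlined.  Hence within a
   block of equal sizes only the first occurrence may be overlined. *)
Definition op_rel (x y : nat * bool) : bool :=
  (y.1 < x.1)%N || ((y.1 == x.1) && ~~ y.2).

Definition is_overpartition (s : seq (nat * bool)) : bool :=
  all (fun x => 0 < x.1)%N s && sorted op_rel s.

Definition op_size (s : seq (nat * bool)) : nat := sumn (map fst s).
Definition op_lo (s : seq (nat * bool)) : nat := count snd s.

Definition op_of_tuple n k (t : k.-tuple ('I_n.+1 * bool)) : seq (nat * bool) :=
  map (fun x => (nat_of_ord x.1, x.2)) t.

(* Every such pi has at most n parts, each of size at most n, so it is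
   represented exactly once as a k.-tuple of ('I_n.+1 * bool), k <= n. *)
Definition overpart_coef (R : comNzRingType) (a : R) (n : nat) : R :=
  \sum_(k < n.+1)
     \sum_(t : k.-tuple ('I_n.+1 * bool) |
            is_overpartition (op_of_tuple t) && (op_size (op_of_tuple t) == n))
        a ^+ op_lo (op_of_tuple t).

Definition fps (R : comNzRingType) := nat -> R.

Definition fps_of_poly (R : comNzRingType) (p : {poly R}) : fps R := fun n => p`_n.

Definition fps_mul (R : comNzRingType) (f g : fps R) : fps R :=
  fun n => \sum_(i < n.+1) f i * g (n - i)%N.

(* Coefficients 0..n of the multiplicative inverse of a series f with
   constant term 1:  g_0 = 1,  g_n = - sum_{i=1}^n f_i g_{n-i}. *)
Fixpoint fps_inv_seq (R : comNzRingType) (f : fps R) (n : nat) : seq R :=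
  match n with
  | 0 => [:: 1]
  | n'.+1 => let s := fps_inv_seq f n' in
             rcons s (- \sum_(1 <= i < n'.+2) f i * nth 0 s (n'.+1 - i))
  end.

(* 1/f, for f with f 0 = 1 (only used for such f below). *)
Definition fps_inv (R : comNzRingType) (f : fps R) : fps R :=
  fun n => nth 0 (fps_inv_seq f n) n.

Definition qpoch (R : comNzRingType) (n : nat) : {poly R} :=
  \prod_(i < n) (1 - 'X^(i.+1)).

Definition gauss_binom (R : comNzRingType) (M N : nat) : fps R :=
  if (N <= M)%N then
    fps_mul (fps_of_poly (qpoch R M))
      (fps_mul (fps_inv (fps_of_poly (qpoch R N)))
               (fps_inv (fps_of_poly (qpoch R (M - N)))))
  else fun _ => 0.

From mathcomp Require Import all_boot all_order all_algebra.
From mathcomp Require Import ring zify.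
Import GRing.Theory.
Set Implicit Arguments. Unset Strict Implicit. Unset Printing Implicit Defensive.

(* By Cauchy's q-binomial theorem the inner sum is (-a;q)_m = prod_{i<m}(1+aq^i),
   so the m-th summand is 1 for m = 0 and (1 + a) q^m B_m for m > 0, where
     B_m = prod_{1<=i<m} (1 + a q^i) / (q;q)_m
   is the generating function of the overpartitions with parts at most m in
   which a part equal to m is never overlined.  On the other side, removing the
   largest part m of a nonempty overpartition (overlined or not: weight 1 + a)
   leaves exactly such an overpartition, so both sides equal
   1 + (1 + a) sum_{m>=1} q^m B_m. *)

Definition overline_choices (m p : nat) : seq bool :=
  if (p < m)%N then [:: true; false] else if p == m then [:: false] else [::].

Definition next_parts (m n : nat) : seq (nat * bool) :=
  [seq (p, b) | p <- iota 1 n, b <- overline_choices m p].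

(* s is an overpartition of n that may follow a non-overlined part m, i.e. all
   its parts are at most m and a part equal to m is not overlined. *)
Definition op_below (m n : nat) (s : seq (nat * bool)) : bool :=
  [&& all (fun x => 0 < x.1)%N s, path op_rel (m, false) s & op_size s == n].

(* Enumeration of the s with op_below m n s, by choice of the first part;
   the fuel bounds the number of parts and is sufficient as soon as n <= fuel. *)
Fixpoint op_below_enum (fuel m n : nat) : seq (seq (nat * bool)) :=
  match fuel with
  | 0 => if n == 0 then [:: [::]] else [::]
  | f.+1 => if n == 0 then [:: [::]] else
      [seq x :: s | x <- next_parts m n, s <- op_below_enum f x.1 (n - x.1)]
  end.

Lemma mem_next_parts m n x :
  (x \in next_parts m n) = [&& 0 < x.1, x.1 <= n & op_rel (m, false) x]%N.
Proof.
case: x => p b /=; apply/allpairsPdep/idP.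
  case=> [q [c [Hq Hc [-> ->]]]]; move: Hq Hc; rewrite mem_iota /overline_choices /op_rel /=.
  move=> /andP [Hq1 Hq2].
  have -> : (0 < q)%N by lia.
  have -> : (q <= n)%N by lia.
  by case: ltngtP => //= _; rewrite ?inE; case: c.
move=> /and3P [H1 H2 H3]; exists p, b; split => //.
  by rewrite mem_iota; apply/andP; split; lia.
by move: H3; rewrite /overline_choices /op_rel /=; case: ltngtP => //= _; case: b.
Qed.

Lemma uniq_next_parts m n : uniq (next_parts m n).
Proof.
apply: allpairs_uniq_dep; first exact: iota_uniq.
  by move=> p _; rewrite /overline_choices; case: ltngtP.
by move=> [p b] [q c] _ _ /= [-> ->].
Qed.

Lemma op_path_head p b c s : path op_rel (p, b) s = path op_rel (p, c) s.
Proof. by case: s. Qed.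

Lemma op_below_nil m n : op_below m n [::] = (n == 0).
Proof. by rewrite /op_below /op_size /= eq_sym. Qed.

Lemma op_below_cons m n p b s :
  op_below m n ((p, b) :: s) =
  [&& 0 < p, p <= n, op_rel (m, false) (p, b) & op_below p (n - p) s]%N.
Proof.
rewrite /op_below /op_size /= (op_path_head p b false).
set t := sumn _; have -> : (p + t == n) = (p <= n) && (t == n - p).
  apply/idP/andP => [/eqP E | [H /eqP E]]; last by apply/eqP; lia.
  by split; [lia | apply/eqP; lia].
by case: (0 < p)%N; case: (p <= n)%N; case: op_rel; case: (all _ s); case: path.
Qed.

Lemma mem_op_below_enum fuel m n s :
  (n <= fuel)%N -> (s \in op_below_enum fuel m n) = op_below m n s.
Proof.
elim: fuel m n s => [|f IH] m n s Hn.
  have -> : n = 0 by lia.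
  by case: s => [|[p b] s]; rewrite ?op_below_nil ?op_below_cons //=; case: p.
rewrite /=; case: eqP => [->|/eqP Hn0].
  by case: s => [|[p b] s]; rewrite ?op_below_nil ?op_below_cons //=; case: p.
case: s => [|[p b] s]; rewrite ?op_below_nil ?op_below_cons.
  by rewrite (negbTE Hn0); apply/negbTE/allpairsPdep => -[x [y [_ _ //]]].
apply/allpairsPdep/idP.
  case=> [x [y [Hx Hy [Ex Ey]]]]; subst x y.
  move: Hx; rewrite mem_next_parts /= => /and3P [H1 H2 H3].
  by move: Hy; rewrite /= IH; [rewrite H1 H2 H3 | lia].
move=> /and4P [H1 H2 H3 H4]; exists (p, b), s; split => //.
  by rewrite mem_next_parts H1 H2 H3.
by rewrite IH //=; lia.
Qed.

Lemma uniq_op_below_enum fuel m n : uniq (op_below_enum fuel m n).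
Proof.
elim: fuel m n => [|f IH] m n /=; first by case: (n == 0).
case: (n == 0) => //.
apply: allpairs_uniq_dep; first exact: uniq_next_parts.
  by move=> x _; exact: IH.
by move=> [x s] [y t] _ _ /= [-> ->].
Qed.

Section Counting.
Variables (R : comNzRingType) (a : R).
Local Open Scope ring_scope.

(* The coefficient of q^n in B_m: the sum of a^(l_o(s)) over all s with
   op_below m n s. *)
Definition op_below_coef (m n : nat) : R :=
  \sum_(s <- op_below_enum n m n) a ^+ op_lo s.

Lemma op_below_coef_fuel fuel m n : (n <= fuel)%N ->
  \sum_(s <- op_below_enum fuel m n) a ^+ op_lo s = op_below_coef m n.
Proof.
move=> Hn; apply: perm_big; apply: uniq_perm; rewrite ?uniq_op_below_enum //.
by move=> s; rewrite !mem_op_below_enum.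
Qed.

Lemma op_below_coef0 m : op_below_coef m 0 = 1.
Proof. by rewrite /op_below_coef /= big_cons big_nil addr0. Qed.

Definition part_weight (m p : nat) : R :=
  if (p < m)%N then a + 1 else if p == m then 1 else 0.

Lemma op_below_coef_rec m n :
  op_below_coef m n.+1 =
  \sum_(1 <= p < n.+2) part_weight m p * op_below_coef p (n.+1 - p).
Proof.
rewrite {1}/op_below_coef /= big_allpairs_dep /next_parts big_allpairs_dep.
rewrite /index_iota subSS subn0 big_seq [RHS]big_seq; apply: eq_bigr => p.
rewrite mem_iota => /andP [H1 H2].
have Eb b : \sum_(s <- op_below_enum n (p, b).1 (n.+1 - (p, b).1)) a ^+ op_lo ((p, b) :: s)
   = a ^+ b * op_below_coef p (n.+1 - p).
  rewrite /= -(@op_below_coef_fuel n); last by lia.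
  by rewrite big_distrr /=; apply: eq_bigr => s _; rewrite /op_lo /= exprD.
under eq_bigr => b _ do rewrite Eb.
rewrite /overline_choices /part_weight.
by case: ltngtP => _; rewrite ?big_cons ?big_nil /= ?expr1 ?expr0; ring.
Qed.

End Counting.

Lemma part_le_op_size s x : x \in s -> (x.1 <= op_size s)%N.
Proof.
elim: s => [|y s IH] //=; rewrite inE => /orP [/eqP ->|/IH]; rewrite /op_size /=; lia.
Qed.

Lemma size_le_op_size s : all (fun x => 0 < x.1)%N s -> (size s <= op_size s)%N.
Proof.
elim: s => [|y s IH] //= /andP [H1 /IH]; rewrite /op_size /=; lia.
Qed.

Lemma mem_op_of_tuples n k (s : seq (nat * bool)) :
  (forall x, x \in s -> x.1 < n.+1)%N ->
  (s \in [seq op_of_tuple t | t <- index_enum (k.-tuple ('I_n.+1 * bool))])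
  = (size s == k).
Proof.
move=> Hs; apply/mapP/idP.
  by case=> t _ ->; rewrite /op_of_tuple size_map size_tuple.
move=> /eqP Hk.
pose u := [seq ((inord x.1 : 'I_n.+1), x.2) | x <- s].
have Hu : size u == k by rewrite size_map Hk.
exists (Tuple Hu); first exact: mem_index_enum.
rewrite /op_of_tuple /= /u -map_comp -[LHS]map_id; apply/eq_in_map => x Hx /=.
by rewrite inordK ?Hs //; case: x Hx.
Qed.

Section Bridge.
Variables (R : comNzRingType) (a : R).
Local Open Scope ring_scope.

(* An overpartition of n is the same as an s with op_below n.+1 n s; this
   sorts the tuples of length k occurring in overpart_coef. *)
Lemma overpart_coef_length n k :
  \sum_(t : k.-tuple ('I_n.+1 * bool) |
         is_overpartition (op_of_tuple t) && (op_size (op_of_tuple t) == n))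
      a ^+ op_lo (op_of_tuple t)
  = \sum_(s <- op_below_enum n n.+1 n | size s == k) a ^+ op_lo s.
Proof.
rewrite -(big_map (@op_of_tuple n k)
  (fun s => is_overpartition s && (op_size s == n)) (fun s => a ^+ op_lo s)).
rewrite -[LHS]big_filter -[RHS]big_filter; apply: perm_big; apply: uniq_perm.
- rewrite filter_uniq // map_inj_uniq ?index_enum_uniq // => t1 t2 /= E.
  by apply: val_inj; apply: (inj_map _ E) => -[i b] [j c] /= [/val_inj -> ->].
- by rewrite filter_uniq // uniq_op_below_enum.
move=> s; rewrite !mem_filter mem_op_below_enum // /op_below /is_overpartition.
case Ha: (all _ s) => //=; case Hn: (op_size s == n); rewrite ?andbF ?andbT //=.
have Hb x : x \in s -> (x.1 < n.+1)%N by move/part_le_op_size; move/eqP: Hn => ->.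
rewrite mem_op_of_tuples //.
case: s Ha Hn Hb => [|y s] /= Ha Hn Hb; first by rewrite andbT.
rewrite {2}/op_rel (Hb y (mem_head _ _)) /=.
by rewrite andbC.
Qed.

(* overpart_coef counts the overpartitions of n, all of which have parts
   at most n < n + 1. *)
Lemma overpart_coefE n : overpart_coef a n = op_below_coef a n.+1 n.
Proof.
rewrite /overpart_coef.
under eq_bigr => k _ do rewrite overpart_coef_length big_mkcond.
rewrite exchange_big /op_below_coef /= [LHS]big_seq [RHS]big_seq.
apply: eq_bigr => s Hs; rewrite -big_mkcond /=.
have Hsz : (size s < n.+1)%N.
  move: Hs; rewrite mem_op_below_enum // /op_below => /and3P [H1 _ /eqP H3].
  by have := size_le_op_size H1; rewrite H3.
by rewrite (big_pred1 (Ordinal Hsz)) // => k /=; rewrite eq_sym.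
Qed.

(* Removing the largest part m (overlined or not) of a nonempty overpartition
   of n leaves an overpartition of n - m counted by B_m. *)
Lemma overpart_coef_largest_part n :
  overpart_coef a n =
  (n == 0)%:R + (1 + a) * \sum_(1 <= m < n.+1) op_below_coef a m (n - m).
Proof.
rewrite overpart_coefE; case: n => [|n].
  by rewrite op_below_coef0 big_geq // mulr0 addr0.
rewrite op_below_coef_rec add0r big_distrr /= !big_nat; apply: eq_bigr => p /andP [_ Hp].
by rewrite /part_weight Hp addrC.
Qed.

End Bridge.

Local Open Scope ring_scope.

Lemma sum_nat_indicator (R : comNzRingType) (F : nat -> R) (c : R) j lo hi :
  \sum_(lo <= p < hi) (if p == j then c else 0) * F p =
  if (lo <= j < hi)%N then c * F j else 0.
Proof.
rewrite -(big_nat1_eq (@GRing.add R) (fun p => c * F p)) big_mkcond.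
by apply: eq_bigr => p _; case: eqP => _; rewrite ?mul0r.
Qed.

Section Recursion.
Variables (R : comNzRingType) (a : R).

(* Raising the bound m lets the part m be overlined and allows parts m + 1. *)
Lemma part_weightS m p :
  part_weight a m.+1 p =
  part_weight a m p + (if p == m then a else 0) + (if p == m.+1 then 1 else 0).
Proof.
rewrite /part_weight; case: (ltngtP p m) => H.
- have -> : (p < m.+1)%N by lia.
  have -> : (p == m.+1) = false by apply/eqP; lia.
  ring.
- have -> : (p < m.+1)%N = false by lia.
  by case: eqP => _; ring.
- rewrite H ltnSn; have -> : (m == m.+1) = false by apply/eqP; lia.
  ring.
Qed.

(* B_0 = 1: no part is allowed. *)
Lemma op_below_coef_0 k : op_below_coef a 0 k = (k == 0)%:R.
Proof.
case: k => [|k]; first by rewrite op_below_coef0.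
rewrite op_below_coef_rec big_nat big1 // => p /andP [H1 _].
by rewrite /part_weight ltn0 (_ : (p == 0) = false) ?mul0r //; apply/eqP; lia.
Qed.

(* Coefficientwise form of  B_{m+1} (1 - q^{m+1}) = B_m (1 + c_m q^m),  where
   c_m = a for m > 0 (the part m becomes overlinable) and c_0 = 0. *)
Lemma op_below_coef_step m k :
  op_below_coef a m.+1 k - (if (k < m.+1)%N then 0 else op_below_coef a m.+1 (k - m.+1))
  = op_below_coef a m k +
    (if m is 0 then 0 else a) * (if (k < m)%N then 0 else op_below_coef a m (k - m)).
Proof.
case: k => [|k].
  by rewrite !op_below_coef0 /=; case: m => [|m] /=; rewrite ?mul0r; ring.
rewrite !op_below_coef_rec.
under eq_bigr => p _ do rewrite part_weightS !mulrDl.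
rewrite !big_split /= !sum_nat_indicator.
case: m => [|m] /=; repeat (case: ifP => ?); try (exfalso; lia);
  rewrite ?mul1r ?mul0r ?subSS; ring.
Qed.

End Recursion.

Section GaussianPolynomials.
Variable R : comNzRingType.
Implicit Types (c : {poly R}) (m j : nat).

Notation Q := (qpoch R).

Lemma qpoch0 : Q 0 = 1.
Proof. by rewrite /qpoch big_ord0. Qed.

Lemma qpochS m : Q m.+1 = Q m * (1 - 'X^(m.+1)).
Proof. by rewrite /qpoch big_ord_recr. Qed.

Lemma qpoch_coef0 m : (Q m)`_0 = 1.
Proof.
elim: m => [|m IH]; first by rewrite qpoch0 coef1.
by rewrite qpochS coef0M IH coefB coef1 coefXn /= subr0 mulr1.
Qed.

Fixpoint gauss_poly (m j : nat) : {poly R} :=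
  match m with
  | 0 => (j == 0)%:R
  | m'.+1 => match j with
             | 0 => 1
             | j'.+1 => gauss_poly m' j' + 'X^(j'.+1) * gauss_poly m' j'.+1
             end
  end.

Lemma gauss_poly_gt m j : (m < j)%N -> gauss_poly m j = 0.
Proof.
elim: m j => [|m IH] [|j] //= H.
by rewrite !IH ?mulr0 ?addr0 //; lia.
Qed.

Lemma gauss_poly_m0 m : gauss_poly m 0 = 1.
Proof. by case: m. Qed.

Lemma gauss_polyE m j : (j <= m)%N -> Q j * Q (m - j) * gauss_poly m j = Q m.
Proof.
elim: m j => [|m IH] [|j] //= H.
- by rewrite qpoch0 !mul1r.
- by rewrite qpoch0 subn0 mul1r mulr1.
rewrite subSS; have IHj := IH j H.
case: (ltngtP j m) => Hjm; first last.
- rewrite -Hjm (gauss_poly_gt (ltnSn j)) mulr0 addr0 subnn qpoch0 mulr1 qpochS.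
  by rewrite -Hjm subnn qpoch0 mulr1 in IHj; rewrite -{2}IHj; ring.
- by exfalso; lia.
have IHj1 := IH j.+1 Hjm.
have Emj : (m - j = (m - j.+1).+1)%N by lia.
have EX : 'X^(m.+1) = 'X^(j.+1) * 'X^((m - j.+1).+1) :> {poly R}.
  by rewrite -exprD; congr ('X^_); lia.
transitivity ((1 - 'X^(j.+1)) * (Q j * Q (m - j) * gauss_poly m j)
   + 'X^(j.+1) * (1 - 'X^((m - j.+1).+1)) * (Q j.+1 * Q (m - j.+1) * gauss_poly m j.+1)).
  by rewrite {1 2}Emj qpochS [Q (m - j.+1).+1]qpochS; ring.
by rewrite IHj IHj1 qpochS EX; ring.
Qed.

Definition qbin_term c j : {poly R} := c ^+ j * 'X^('C(j, 2)).

Lemma qbin_termS c j : qbin_term c j.+1 = c * qbin_term (c * 'X) j.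
Proof. by rewrite /qbin_term binS bin1 exprD exprS exprMn; ring. Qed.

Lemma qbin_termX c j : qbin_term c j * 'X^j = qbin_term (c * 'X) j.
Proof. by rewrite /qbin_term exprMn; ring. Qed.

Lemma q_binomial m c :
  \sum_(j < m.+1) qbin_term c j * gauss_poly m j = \prod_(i < m) (1 + c * 'X^i).
Proof.
elim: m c => [|m IH] c.
  by rewrite big_ord1 big_ord0 /qbin_term /= expr0 mul1r mulr1.
rewrite big_ord_recl big_ord_recl /=.
under eq_bigr => j _ do rewrite mulrDr.
rewrite big_split /=.
have Eleft : \sum_(i < m.+1) qbin_term c (bump 0 i) * gauss_poly m i
           = c * \prod_(i < m) (1 + c * 'X * 'X^i).
  rewrite -IH big_distrr /=; apply: eq_bigr => i _.
  by rewrite /bump /= add1n qbin_termS; ring.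
have Eright : 1 + \sum_(i < m.+1) qbin_term c (bump 0 i) * ('X^(i.+1) * gauss_poly m i.+1)
            = \prod_(i < m) (1 + c * 'X * 'X^i).
  rewrite -IH big_ord_recr /= gauss_poly_gt // !mulr0 addr0 [RHS]big_ord_recl /=.
  congr (_ + _); first by rewrite /qbin_term /= ?expr0 ?mul1r ?gauss_poly_m0.
  by apply: eq_bigr => i _; rewrite /bump /= !add1n mulrA qbin_termX.
under eq_bigr => i _ do rewrite add0n.
under [X in _ + (_ + X)]eq_bigr => i _ do rewrite add0n.
have -> : qbin_term c 0 = 1 by rewrite /qbin_term /= !expr0 mulr1.
rewrite mulr1 addrCA Eright Eleft.
under [X in _ = _ * X]eq_bigr => i _ do rewrite /bump /= add1n exprS mulrA.
by rewrite expr0; ring.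
Qed.

End GaussianPolynomials.

Arguments gauss_poly {R} m j.

Section Truncation.
Variables (R : comNzRingType) (T : nat).
Implicit Types (p q : {poly R}) (f g : fps R).

Definition eq_upto p q := forall k, (k < T)%N -> p`_k = q`_k.

Lemma eq_upto_refl p : eq_upto p p. Proof. by []. Qed.

Lemma eq_upto_sym p q : eq_upto p q -> eq_upto q p.
Proof. by move=> E k Hk; rewrite E. Qed.

Lemma eq_upto_trans p q r : eq_upto p q -> eq_upto q r -> eq_upto p r.
Proof. by move=> E1 E2 k Hk; rewrite E1 ?E2. Qed.

Lemma eq_uptoM p q p' q' : eq_upto p p' -> eq_upto q q' -> eq_upto (p * q) (p' * q').
Proof.
move=> E1 E2 k Hk; rewrite !coefM; apply: eq_bigr => i _.
have := ltn_ord i => Hi; rewrite E1 ?E2 //; lia.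
Qed.

Definition trunc_poly f : {poly R} := \poly_(i < T) f i.

Lemma trunc_polyE f k : (k < T)%N -> (trunc_poly f)`_k = f k.
Proof. by move=> Hk; rewrite coef_poly Hk. Qed.

Lemma fps_mulE f g k : (k < T)%N -> fps_mul f g k = (trunc_poly f * trunc_poly g)`_k.
Proof.
move=> Hk; rewrite coefM /fps_mul; apply: eq_bigr => i _.
by have := ltn_ord i => Hi; rewrite !trunc_polyE //; lia.
Qed.

Lemma trunc_poly_of_poly p : eq_upto (trunc_poly (fps_of_poly p)) p.
Proof. by move=> k Hk; rewrite trunc_polyE. Qed.

Lemma trunc_poly_mul f g : eq_upto (trunc_poly (fps_mul f g)) (trunc_poly f * trunc_poly g).
Proof. by move=> k Hk; rewrite trunc_polyE // fps_mulE. Qed.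

Lemma size_fps_inv_seq f n : size (fps_inv_seq f n) = n.+1.
Proof. by elim: n => [|n IH] //=; rewrite size_rcons IH. Qed.

Lemma nth_fps_inv_seq f n i : (i <= n)%N -> nth 0 (fps_inv_seq f n) i = fps_inv f i.
Proof.
elim: n => [|n IH] Hi; first by have -> : i = 0%N by lia.
case: (ltnP i n.+1) => H; first by rewrite /= nth_rcons size_fps_inv_seq H IH.
by have -> : i = n.+1 by lia.
Qed.

Lemma fps_inv_rec f k :
  fps_inv f k.+1 = - \sum_(1 <= i < k.+2) f i * fps_inv f (k.+1 - i)%N.
Proof.
rewrite {1}/fps_inv /= nth_rcons size_fps_inv_seq ltnn eqxx; congr (- _).
rewrite big_nat [RHS]big_nat; apply: eq_bigr => i /andP [H1 H2].
by rewrite nth_fps_inv_seq //; lia.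
Qed.

Lemma fps_mul_inv f : f 0%N = 1 ->
  forall k, \sum_(i < k.+1) f i * fps_inv f (k - i)%N = (k == 0%N)%:R.
Proof.
move=> Hf [|k]; first by rewrite big_ord1 Hf mul1r /fps_inv.
rewrite big_ord_recl Hf mul1r subn0 fps_inv_rec /= big_add1 /= big_mkord.
under [X in _ + X]eq_bigr => i _ do rewrite /bump /= add1n subSS.
under [X in - X]eq_bigr => i _ do rewrite subSS.
by rewrite addNr.
Qed.

Lemma trunc_poly_inv f : f 0%N = 1 -> eq_upto (trunc_poly (fps_inv f) * trunc_poly f) 1.
Proof.
move=> Hf k Hk; rewrite mulrC coefM coef1 -(fps_mul_inv Hf k); apply: eq_bigr => i _.
by have := ltn_ord i => Hi; rewrite !trunc_polyE //; lia.
Qed.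

End Truncation.

Section GeneratingFunctions.
Variables (R : comNzRingType) (a : R) (T : nat).

Notation Q := (qpoch R).
Notation eqT := (eq_upto T).
Notation trunc := (trunc_poly T).

Definition qpoch_inv m : {poly R} := trunc (fps_inv (fps_of_poly (Q m))).

Lemma qpoch_invK m : eqT (qpoch_inv m * Q m) 1.
Proof.
apply: eq_upto_trans (eq_uptoM (eq_upto_refl _) (eq_upto_sym (trunc_poly_of_poly _))) _.
by apply: trunc_poly_inv; rewrite /fps_of_poly qpoch_coef0.
Qed.

Lemma gauss_binomE m j : eqT (trunc (gauss_binom R m j)) (gauss_poly m j).
Proof.
rewrite /gauss_binom; case: leqP => Hj; last first.
  by move=> k Hk; rewrite trunc_polyE // gauss_poly_gt // coef0.
apply: eq_upto_trans (trunc_poly_mul _ _) _.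
apply: eq_upto_trans (eq_uptoM (trunc_poly_of_poly _) (trunc_poly_mul _ _)) _.
apply: eq_upto_sym.
rewrite -[X in eqT X _](mulr1 (gauss_poly m j)) -[X in gauss_poly m j * X](mulr1 1).
apply: eq_upto_trans (eq_uptoM (eq_upto_refl _)
  (eq_uptoM (eq_upto_sym (qpoch_invK j)) (eq_upto_sym (qpoch_invK (m - j))))) _.
have -> : gauss_poly m j * (qpoch_inv j * Q j * (qpoch_inv (m - j) * Q (m - j)))
   = (Q j * Q (m - j) * gauss_poly m j) * (qpoch_inv j * qpoch_inv (m - j)) by ring.
by rewrite gauss_polyE.
Qed.

Lemma inner_sumE m N : (m < N)%N ->
  eqT (trunc (fun k => \sum_(j < N) a ^+ j *
         fps_mul (fps_of_poly ('X^('C(j, 2)) : {poly R})) (gauss_binom R m j) k))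
      (\prod_(i < m) (1 + a%:P * 'X^i)).
Proof.
move=> HmN k Hk; rewrite trunc_polyE // -q_binomial coef_sum.
rewrite (big_ord_widen N (fun j => (qbin_term a%:P j * gauss_poly m j)`_k) HmN).
rewrite [RHS]big_mkcond /=; apply: eq_bigr => j _.
rewrite (fps_mulE _ _ Hk) (eq_uptoM (trunc_poly_of_poly _) (gauss_binomE m j)) //.
case: (ltnP j m.+1) => Hj; first by rewrite /qbin_term -rmorphXn -mulrA coefCM.
by rewrite gauss_poly_gt // mulr0 coef0 mulr0.
Qed.

Definition below_gf m : {poly R} := trunc (op_below_coef a m).

Definition overlined_prod m : {poly R} := \prod_(1 <= i < m) (1 + a%:P * 'X^i).

Lemma overlined_prodS m :
  overlined_prod m.+1 = overlined_prod m * (1 + (if m is 0 then 0 else a)%:P * 'X^m).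
Proof.
rewrite /overlined_prod; case: m => [|m]; last by rewrite big_nat_recr.
by rewrite !big_geq // polyC0 mul0r addr0 mulr1.
Qed.

Lemma trunc_shift (f : fps R) k d : (k < T)%N ->
  (if (k < d)%N then 0 else (trunc f)`_(k - d)) = if (k < d)%N then 0 else f (k - d)%N.
Proof. by move=> Hk; case: ifP => // _; rewrite trunc_polyE //; lia. Qed.

Lemma below_gf_step m :
  eqT (below_gf m.+1 * (1 - 'X^(m.+1)))
      (below_gf m * (1 + (if m is 0 then 0 else a)%:P * 'X^m)).
Proof.
move=> k Hk; rewrite mulrBr mulr1 coefB coefMXn mulrDr mulr1 coefD mulrCA coefCM coefMXn.
by rewrite /below_gf !trunc_shift // !trunc_polyE // op_below_coef_step.
Qed.

Lemma below_gfE m : eqT (below_gf m * Q m) (overlined_prod m).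
Proof.
elim: m => [|m IH].
  rewrite qpoch0 mulr1 /overlined_prod big_geq // => k Hk.
  by rewrite /below_gf trunc_polyE // op_below_coef_0 coef1.
rewrite qpochS overlined_prodS.
rewrite (_ : below_gf m.+1 * (Q m * (1 - 'X^(m.+1)))
           = (below_gf m.+1 * (1 - 'X^(m.+1))) * Q m); last by ring.
apply: eq_upto_trans (eq_uptoM (below_gf_step m) (eq_upto_refl _)) _.
rewrite (_ : below_gf m * (1 + (if m is 0 then 0 else a)%:P * 'X^m) * Q m
           = (below_gf m * Q m) * (1 + (if m is 0 then 0 else a)%:P * 'X^m)); last by ring.
exact: eq_uptoM IH (eq_upto_refl _).
Qed.

Lemma overlined_prodE m :
  \prod_(i < m.+1) (1 + a%:P * 'X^i) = (1 + a%:P) * overlined_prod m.+1.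
Proof.
rewrite big_ord_recl expr0 mulr1 /overlined_prod big_add1 /= big_mkord.
by apply: congr2 => //; apply: eq_bigr => i _.
Qed.

End GeneratingFunctions.

Definition rhs_term (R : comNzRingType) (a : R) (N m : nat) : fps R :=
  fps_mul (fps_of_poly ('X^m : {poly R}))
    (fps_mul (fps_inv (fps_of_poly (qpoch R m)))
       (fun k => \sum_(j < N) a ^+ j *
          fps_mul (fps_of_poly ('X^('C(j, 2)) : {poly R})) (gauss_binom R m j) k)).

Lemma rhs_termE (R : comNzRingType) (a : R) N m n : (m < N)%N ->
  rhs_term a N m n =
  if m is 0 then (n == 0)%:R
  else (1 + a) * (if (n < m)%N then 0 else op_below_coef a m (n - m)).
Proof.
move=> HmN; have Hn := ltnSn n; rewrite /rhs_term (fps_mulE _ _ Hn).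
rewrite (eq_uptoM (trunc_poly_of_poly _) (eq_upto_trans (trunc_poly_mul _ _)
          (eq_uptoM (eq_upto_refl (qpoch_inv R n.+1 m)) (inner_sumE (T := n.+1) a HmN)))) //.
case: m HmN => [|m] HmN /=.
  by rewrite big_ord0 expr0 mul1r mulr1; have := qpoch_invK R 0 Hn; rewrite qpoch0 mulr1 coef1.
rewrite (overlined_prodE a m).
have E : eq_upto n.+1 ('X^(m.+1) * (qpoch_inv R n.+1 m.+1 * ((1 + a%:P) * overlined_prod a m.+1)))
                      ((1 + a%:P) * ('X^(m.+1) * below_gf a n.+1 m.+1)).
  apply: eq_upto_trans (eq_uptoM (eq_upto_refl _) (eq_uptoM (eq_upto_refl _)
           (eq_uptoM (eq_upto_refl _) (eq_upto_sym (below_gfE a m.+1))))) _.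
  rewrite -[X in eq_upto _ _ X]mulr1.
  rewrite (_ : 'X^(m.+1) * _ = ((1 + a%:P) * ('X^(m.+1) * below_gf a n.+1 m.+1)) *
                                 (qpoch_inv R n.+1 m.+1 * qpoch R m.+1)); last by ring.
  exact: eq_uptoM (eq_upto_refl _) (qpoch_invK R m.+1).
rewrite E // mulrDl mul1r coefD coefCM coefXnM /below_gf trunc_shift //.
by case: ifP => _; ring.
Qed.

Lemma sum_shift_prefix (R : comNzRingType) (F : nat -> R) n N : (n < N.+1)%N ->
  \sum_(i < N) (if (n < i.+1)%N then 0 else F i.+1) = \sum_(1 <= m < n.+1) F m.
Proof.
move=> HnN; rewrite -(big_mkord xpredT (fun i => if (n < i.+1)%N then 0 else F i.+1)).
rewrite (big_cat_nat _ (n := n)) //=.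
have -> : \sum_(n <= i < N) (if (n < i.+1)%N then 0 else F i.+1) = 0.
  by rewrite big_nat big1 // => i /andP [Hi _]; rewrite ifT //; lia.
rewrite addr0 big_add1 /= !big_nat; apply: eq_bigr => i /andP [_ Hi].
by rewrite ifF //; lia.
Qed.

Lemma rhs_sumE (R : comNzRingType) (a : R) N n : (n < N)%N ->
  \sum_(m < N) rhs_term a N m n =
  (n == 0)%:R + (1 + a) * \sum_(1 <= m < n.+1) op_below_coef a m (n - m).
Proof.
case: N => [//|N] HnN; rewrite big_ord_recl rhs_termE //=.
have /= <- := sum_shift_prefix (fun m => op_below_coef a m (n - m)) HnN.
rewrite big_distrr /=; congr (_ + _); apply: eq_bigr => i _.
by rewrite /bump /= add1n rhs_termE // ltnS.
Qed.

Unset Implicit Arguments.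

Theorem mainTheorem10 (R : comNzRingType) (a : R) (n N : nat) :
  (n < N)%N ->
  overpart_coef a n =
  \sum_(m < N)
     fps_mul (fps_of_poly ('X^m : {poly R}))
       (fps_mul (fps_inv (fps_of_poly (qpoch R m)))
          (fun k => \sum_(j < N)
                      a ^+ j * fps_mul (fps_of_poly ('X^('C(j, 2)) : {poly R}))
                                       (gauss_binom R m j) k)) n.
Proof.
move=> HnN.
exact: eq_trans (overpart_coef_largest_part a n) (esym (rhs_sumE a HnN)).
Qed.
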